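(* Let $H$ be a graph with at least one edge, and suppose $H\cong H_1\times H_2$ where neither $H_1$ nor $H_2$ is isomorphic to $K_1^*$. Then $H$ is not projective.
   Context: Graphs are finite, undirected, without parallel edges, loops allowed; $K_1^*$ is the one-vertex graph with a loop. A homomorphism is an edge-preserving vertex map. The direct product $H_1\times H_2$ has vertex set $V(H_1)\times V(H_2)$ with $(x_1,y_1)(x_2,y_2)$ an edge iff $x_1x_2\in E(H_1)$ and $y_1y_2\in E(H_2)$; $H^m$ is the $m$-fold product and $\pi_i(x_1,\dots,x_m)=x_i$. A homomorphism $f\colon H^m\to H$ is idempotent if $f(x,\dots,x)=x$ for all $x$. $H$ is projective if for every $m\ge2$ every idempotent homomorphism $H^m\to H$ equals some $\pi_i$. *)

From mathcomp Require Import all_boot.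
Unset Printing Implicit Defensive.

(* A finite undirected graph without parallel edges, loops allowed:
   a finite vertex type with a symmetric (not necessarily irreflexive)
   adjacency relation. *)
Record graph := Graph {
  gV : finType;
  gE : rel gV;
  gE_sym : symmetric gE }.

Definition hom (G H : graph) (f : gV G -> gV H) : Prop :=
  forall x y, gE G x y -> gE H (f x) (f y).

Definition iso (G H : graph) : Prop :=
  exists f : gV G -> gV H, bijective f /\ forall x y, gE G x y = gE H (f x) (f y).

Definition has_edge (G : graph) : Prop := exists x y, gE G x y.

Lemma K1star_sym : symmetric (fun _ _ : unit => true). Proof. by []. Qed.
Definition K1star : graph := @Graph unit _ K1star_sym.

Definition prod_rel (G H : graph) : rel (gV G * gV H) :=
  fun x y => gE G x.1 y.1 && gE H x.2 y.2.
Lemma prod_rel_sym (G H : graph) : symmetric (prod_rel G H).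
Proof. by move=> x y; rewrite /prod_rel (gE_sym G (x.1)) (gE_sym H (x.2)). Qed.
Definition prodg (G H : graph) : graph := Graph _ _ (prod_rel_sym G H).

Definition pow_rel (G : graph) (m : nat) : rel {ffun 'I_m -> gV G} :=
  fun x y => [forall i, gE G (x i) (y i)].
Lemma pow_rel_sym (G : graph) (m : nat) : symmetric (pow_rel G m).
Proof.
move=> x y; apply/forallP/forallP=> H i; by rewrite gE_sym.
Qed.
Definition powg (G : graph) (m : nat) : graph := Graph _ _ (pow_rel_sym G m).

Definition idempotent_map (G : graph) (m : nat) (f : gV (powg G m) -> gV G) : Prop :=
  forall x : gV G, f [ffun _ : 'I_m => x] = x.

Definition projective (G : graph) : Prop :=
  forall m : nat, 2 <= m ->
  forall f : gV (powg G m) -> gV G, hom (powg G m) G f -> idempotent_map G m f ->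
  exists i : 'I_m, forall x : gV (powg G m), f x = x i.

From mathcomp Require Import all_boot.

(* Transport the decomposition H ~ H1 x H2 along an isomorphism
   phi (inverse psi) and define the binary "mixing" operation
       mix x y := psi ((phi x).1, (phi y).2),
   which keeps the H1-coordinate of x and the H2-coordinate of y.  It is an
   idempotent homomorphism H^2 -> H.  If H is projective, every idempotent
   binary polymorphism is a projection; so mix x y = x for all x, y (or
   mix x y = y).  In the first case the H2-coordinate of phi is constant,
   i.e. the coordinate map H -> H2, a surjective homomorphism, is constant;
   since H has an edge, its only value carries a loop and H2 ~ K1^*.  The
   second case gives H1 ~ K1^* symmetrically. *)

Lemma constant_surjective_hom_K1star {G K : graph} {h : gV G -> gV K} :
  hom G K h -> has_edge G -> (forall y, exists x, h x = y) ->
  (forall x x', h x = h x') -> iso K K1star.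
Proof.
move=> hom_h [u [v euv]] h_onto h_const.
have all_hu : forall y, y = h u.
  by move=> y; have [x <-] := h_onto y; exact: h_const.
have loop_hu : gE K (h u) (h u) by rewrite {2}(h_const u v); exact: hom_h.
exists (fun _ => tt); split.
  by exists (fun _ => h u) => [y|[]] //; rewrite -all_hu.
by move=> x y; rewrite (all_hu x) (all_hu y) loop_hu.
Qed.

Definition binary_polymorphism {G : graph} (g : gV G -> gV G -> gV G) : Prop :=
  forall x x' y y', gE G x x' -> gE G y y' -> gE G (g x y) (g x' y').

Definition pair2 {T : finType} (x y : T) : {ffun 'I_2 -> T} :=
  [ffun i : 'I_2 => if i == ord0 then x else y].

Definition uncurry2 {G : graph} (g : gV G -> gV G -> gV G) :
  gV (powg G 2) -> gV G := fun x => g (x ord0) (x ord_max).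

Lemma projective_binary {G : graph} (g : gV G -> gV G -> gV G) :
  projective G -> binary_polymorphism g -> (forall x, g x x = x) ->
  (forall x y, g x y = x) \/ (forall x y, g x y = y).
Proof.
move=> projG poly_g idem_g.
have hom_g : hom (powg G 2) G (uncurry2 g).
  by move=> x y /forallP exy; apply: poly_g.
have idem_ug : idempotent_map G 2 (uncurry2 g).
  by move=> x; rewrite /uncurry2 !ffunE idem_g.
have [i proj_i] := projG 2 (leqnn 2) _ hom_g idem_ug.
have eval_i : forall x y, g x y = pair2 x y i.
  by move=> x y; rewrite -proj_i /uncurry2 !ffunE.
have [i0 | i1] : i = ord0 \/ i = ord_max.
  by case: i {proj_i eval_i} => [[|[|k]] lt_i] //; [left | right]; apply: val_inj.
- by left=> x y; rewrite eval_i i0 ffunE.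
- by right=> x y; rewrite eval_i i1 ffunE.
Qed.

Section Mixing.

Context {H H1 H2 : graph} {phi : gV H -> gV (prodg H1 H2)}.
Context {psi : gV (prodg H1 H2) -> gV H}.
Hypotheses (phiK : cancel phi psi) (psiK : cancel psi phi).
Hypothesis phiE : forall x y, gE H x y = gE (prodg H1 H2) (phi x) (phi y).

Definition mix (x y : gV H) : gV H := psi ((phi x).1, (phi y).2).

Lemma mix_polymorphism : binary_polymorphism mix.
Proof.
move=> x x' y y'; rewrite !phiE => /andP[ex _] /andP[_ ey].
by rewrite /mix !psiK; apply/andP.
Qed.

Lemma mix_idem x : mix x x = x.
Proof. by rewrite /mix -surjective_pairing phiK. Qed.

Lemma fst_hom : hom H H1 (fun x => (phi x).1).
Proof. by move=> x y; rewrite phiE => /andP[]. Qed.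

Lemma snd_hom : hom H H2 (fun x => (phi x).2).
Proof. by move=> x y; rewrite phiE => /andP[]. Qed.

Lemma fst_onto (x0 : gV H) a : exists x, (phi x).1 = a.
Proof. by exists (psi (a, (phi x0).2)); rewrite psiK. Qed.

Lemma snd_onto (x0 : gV H) b : exists x, (phi x).2 = b.
Proof. by exists (psi ((phi x0).1, b)); rewrite psiK. Qed.

Lemma mix_left_snd_const :
  (forall x y, mix x y = x) -> forall x y, (phi x).2 = (phi y).2.
Proof. by move=> mixL x y; rewrite -(mixL y x) /mix psiK. Qed.

Lemma mix_right_fst_const :
  (forall x y, mix x y = y) -> forall x y, (phi x).1 = (phi y).1.
Proof. by move=> mixR x y; rewrite -(mixR x y) /mix psiK. Qed.

End Mixing.

Theorem mainTheorem9 (H H1 H2 : graph) :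
  has_edge H -> iso H (prodg H1 H2) ->
  ~ iso H1 K1star -> ~ iso H2 K1star ->
  ~ projective H.
Proof.
move=> edgeH [phi [[psi phiK psiK] phiE]] notK1 notK2 projH.
have [u _] := edgeH.
have [mixL | mixR] := projective_binary _ projH
  (mix_polymorphism psiK phiE) (mix_idem phiK).
- apply: notK2; apply: (constant_surjective_hom_K1star (snd_hom phiE) edgeH).
    exact: snd_onto psiK u.
  exact: mix_left_snd_const psiK mixL.
- apply: notK1; apply: (constant_surjective_hom_K1star (fst_hom phiE) edgeH).
    exact: fst_onto psiK u.
  exact: mix_right_fst_const psiK mixR.
Qed.
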